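(* In the formal power series ring $\mathbb Q[[u,v,z]]$, $$\sum_{k,l,n\geq0}\{H_kE_l\}_n\,u^kv^lz^n=\frac{\prod_{j\geq0}(1+u^jz)}{\prod_{j\geq0}(1-u^jvz)}.$$
   Context: For $i\geq1$, $X_i(\sigma)$ is the number of $i$-cycles of $\sigma$. For a partition $\alpha=1^{a_1}2^{a_2}\cdots$ ($a_i$ = number of parts equal to $i$, $|\alpha|=\sum ia_i$, $l(\alpha)=\sum a_i$) let $\binom X\alpha=\prod_i\binom{X_i}{a_i}$ and $\left(\!\binom X\alpha\!\right)=\prod_i\binom{X_i+a_i-1}{a_i}$. Define $H_k=\sum_{\alpha\vdash k}\left(\!\binom X\alpha\!\right)$ and $E_l=\sum_{\alpha\vdash l}(-1)^{|\alpha|-l(\alpha)}\binom X\alpha$ in $\mathbb C[X_1,X_2,\dotsc]$ (character polynomials of $\mathrm{Sym}^k\mathbb C^n$ and $\bigwedge^l\mathbb C^n$; $H_0=E_0=1$). The signed moment of $p$ is $\{p\}_n=\frac1{n!}\sum_{\sigma\in S_n}\mathrm{sgn}(\sigma)p(X_1(\sigma),X_2(\sigma),\dotsc)$, $n\ge0$. *)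

From mathcomp Require Import all_boot all_order all_algebra all_fingroup.
Set Implicit Arguments. Unset Strict Implicit. Unset Printing Implicit Defensive.
Import GRing.Theory.
Local Open Scope ring_scope.

Definition cyc_count (n : nat) (s : {perm 'I_n}) (i : nat) : nat :=
  #|[set c in porbits s | #|c| == i]|.

(* A partition alpha = 1^{a_1} 2^{a_2} ... of k is encoded by its multiplicity
   vector a : {ffun 'I_k -> 'I_k.+1}, where a j is the number of parts equal
   to j.+1 (parts of a partition of k are <= k, multiplicities <= k), subject
   to sum_i i a_i = k. *)
Definition is_part (k : nat) (a : {ffun 'I_k -> 'I_k.+1}) : bool :=
  (\sum_(j < k) j.+1 * a j)%N == k.

Definition part_len (k : nat) (a : {ffun 'I_k -> 'I_k.+1}) : nat :=
  (\sum_(j < k) a j)%N.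

Definition Hval (k : nat) (X : nat -> nat) : rat :=
  \sum_(a : {ffun 'I_k -> 'I_k.+1} | is_part a)
     \prod_(j < k) ('C((X j.+1 + a j - 1)%N, a j))%:R.

Definition Eval (l : nat) (X : nat -> nat) : rat :=
  \sum_(a : {ffun 'I_l -> 'I_l.+1} | is_part a)
     (-1) ^+ (l - part_len a)%N * \prod_(j < l) ('C(X j.+1, a j))%:R.

Definition signed_moment_HE (k l n : nat) : rat :=
  (n`!%:R)^-1 * \sum_(s : {perm 'I_n})
     (-1) ^+ odd_perm s * (Hval k (cyc_count s) * Eval l (cyc_count s)).

(* Q[u,v,z] realised as nested polynomials: outer variable z, then v, then u.
   The coefficient of u^k v^l z^n of p is ((p`_n)`_l)`_k. *)
Definition Puvz := {poly {poly {poly rat}}}.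
Definition zP : Puvz := 'X.
Definition vP : Puvz := ('X)%:P.
Definition uP : Puvz := ('X)%:P%:P.
Definition coef3 (p : Puvz) (k l n : nat) : rat := ((p`_n)`_l)`_k.

(* Truncation at level K of prod_{j>=0}(1+u^j z) / prod_{j>=0}(1-u^j v z):
   factors j < K, and 1/(1-x) expanded as sum_{m<K} x^m. The formal power
   series RHS is the (u,v,z)-adic limit of these truncations. *)
Definition rhs_trunc (K : nat) : Puvz :=
  (\prod_(j < K) (1 + uP ^+ j * zP)) *
  (\prod_(j < K) \sum_(m < K) (uP ^+ j * vP * zP) ^+ m).

From mathcomp Require Import all_boot all_order all_algebra all_fingroup.
From mathcomp Require Import zify ring.
Set Implicit Arguments. Unset Strict Implicit. Unset Printing Implicit Defensive.
Import GRing.Theory Num.Theory.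
Local Open Scope ring_scope.

(* For a weight F on cycle lengths let cycle_sum F A be the sum over the
   permutations s of A of the product of F #|c| over the cycles c of s.
   Splitting the cycles of s into two s-stable parts shows that the cycle sum
   of F + G is the binomial convolution of those of F and G: exponential
   generating functions multiply.  The weights w ^+ i and - (- w) ^+ i have
   egfs 1 / (1 - w z) and 1 + w z, so the weight
   \sum_(a < K) ((u^a v) ^+ i - (- u^a) ^+ i) has egf
   \prod_(a < K) (1 + u^a z) / (1 - u^a v z), truncated.  The same weight
   factors as (-1) ^+ i.+1 * (1 - (- v) ^+ i) * \sum_(a < K) u^(a i); over the
   cycles of s the signs multiply to the signature of s, while the products of
   1 - (- v) ^+ #|c| and \sum_a u^(a #|c|) are the generating functions of the
   E_l and H_k evaluated at the cycle counts of s. *)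

Section PermOrbits.
Variable T : finType.
Implicit Types (s t : {perm T}) (A B : {set T}).

Definition porbits_in s A := porbit s @: A.

Lemma porbits_in_setT s : porbits_in s setT = porbits s.
Proof. by apply/setP => c; apply/imsetP/imsetP => -[x _ ->]; exists x. Qed.

Lemma perm_onS A B s : B \subset A -> perm_on B s -> perm_on A s.
Proof. by move=> BA hs; apply: subset_trans hs BA. Qed.

Lemma perm_on_astabs A s : perm_on A s -> s \in ('N(A | 'P))%g.
Proof. by move=> hs; apply/astabsP => x; rewrite /aperm perm_closed. Qed.

Lemma porbit_astabs s B x y :
  s \in ('N(B | 'P))%g -> x \in B -> y \in porbit s x -> y \in B.
Proof.
move=> /astabsP sB xB /porbitP [i ->]; rewrite permX.
by elim: i => //= i IH; have := sB (iter i s x); rewrite /aperm => ->.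
Qed.

Lemma porbit_memE s x y : x \in porbit s y -> porbit s x = porbit s y.
Proof. by move=> h; apply/eqP; rewrite eq_porbit_mem. Qed.

Lemma perm_porbit s x : s x \in porbit s x.
Proof. by have := mem_porbit s 1 x; rewrite expg1. Qed.

Lemma eq_in_porbit s t (D : {set T}) x :
  {in D, forall y, t y = s y} -> {in D, forall y, s y \in D} -> x \in D ->
  porbit t x = porbit s x.
Proof.
move=> ts sD xD.
have tsX i : (t ^+ i)%g x = (s ^+ i)%g x /\ (s ^+ i)%g x \in D.
  elim: i => [|i [tsi sXD]]; first by rewrite !expg0 !perm1.
  by rewrite !expgSr !permM tsi ts // sD.
by apply/setP => y; apply/porbitP/porbitP => -[i ->]; exists i; case: (tsX i).
Qed.

Lemma porbit_out A s x : perm_on A s -> x \notin A -> porbit s x = [set x].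
Proof.
move=> hs xA; apply/setP => y; rewrite inE; apply/porbitP/eqP => [[i ->]|->].
  by rewrite permX; elim: i => //= i ->; rewrite (out_perm hs).
by exists 0; rewrite expg0 perm1.
Qed.

Lemma cover_porbits_in s A : s \in ('N(A | 'P))%g -> cover (porbits_in s A) = A.
Proof.
move=> sA; apply/setP => x; apply/bigcupP/idP.
  by case=> c /imsetP[y yA ->] xc; apply: porbit_astabs xc.
by move=> xA; exists (porbit s x); [apply: imset_f | apply: porbit_id].
Qed.

Lemma porbits_in_cover s A (C : {set {set T}}) :
  C \subset porbits_in s A -> porbits_in s (cover C) = C.
Proof.
move=> /subsetP CA; apply/setP => c; apply/imsetP/idP.
  case=> x /bigcupP[c' c'C xc'] ->.
  by have /imsetP[y _ Ey] := CA _ c'C; rewrite Ey in xc'; rewrite (porbit_memE xc') -Ey.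
move=> cC; have /imsetP[y _ Ey] := CA _ cC; exists y => //.
by apply/bigcupP; exists c => //; rewrite Ey porbit_id.
Qed.

Lemma porbits_in_stableE s A B : s \in ('N(A | 'P))%g ->
  (porbits_in s B \subset porbits_in s A) && (cover (porbits_in s B) == B) =
  (B \subset A) && (s \in ('N(B | 'P))%g).
Proof.
move=> sA; apply/andP/andP => [[/subsetP BA /eqP coverB]|[BA sB]]; last first.
  by rewrite imsetS // cover_porbits_in.
have porbitB x : x \in B -> porbit s x \subset B.
  move=> xB; apply/subsetP => y yx; rewrite -coverB.
  by apply/bigcupP; exists (porbit s x) => //; apply: imset_f.
split.
  apply/subsetP => x xB; have /imsetP[a aA Ea] := BA _ (imset_f (porbit s) xB).
  by apply: (porbit_astabs sA aA); rewrite -Ea porbit_id.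
apply/astabsP => x; rewrite /aperm; apply/idP/idP => h.
  by apply: (subsetP (porbitB _ h)); rewrite porbit_sym perm_porbit.
by apply: (subsetP (porbitB _ h)); apply: perm_porbit.
Qed.

Lemma porbits_inD s A B : s \in ('N(B | 'P))%g -> B \subset A ->
  porbits_in s A :\: porbits_in s B = porbits_in s (A :\: B).
Proof.
move=> sB BA; apply/setP => c; rewrite inE; apply/andP/imsetP.
  case=> cB /imsetP[x xA Ec]; exists x => //; rewrite inE xA andbT.
  by apply: contra cB => xB; rewrite Ec imset_f.
case=> x /setDP[xA xB] ->; split; last exact: imset_f.
apply/imsetP => -[y yB E]; move/negP: xB; apply.
by apply: (porbit_astabs sB yB); rewrite -E porbit_id.
Qed.

Lemma sum_card_porbits_in s A : s \in ('N(A | 'P))%g ->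
  (\sum_(c in porbits_in s A) #|c| = #|A|)%N.
Proof.
move=> sA; rewrite -sum1_card (partition_big_imset (porbit s)) /=.
apply: eq_bigr => c /imsetP[y yA ->]; rewrite sum1_card.
apply: eq_card => x; rewrite unfold_in.
apply/idP/idP => [xy|/andP[_ /eqP <-]]; last exact: porbit_id.
by rewrite unfold_in (porbit_astabs sA yA xy) (porbit_memE xy) eqxx.
Qed.

Lemma card_porbits_perm_on A s : perm_on A s ->
  #|porbits s| = (#|porbits_in s A| + #|~: A|)%N.
Proof.
move=> hs; have sT : s \in ('N(setT | 'P))%g.
  by apply: perm_on_astabs; apply/subsetP => z; rewrite inE.
rewrite -porbits_in_setT -(cardsID (porbits_in s A)) (setIidPr _) ?imsetS ?subsetT //.
rewrite porbits_inD ?subsetT ?perm_on_astabs // setTD; congr (_ + _)%N.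
apply: card_in_imset => x1 x2 x1A x2A; rewrite !(porbit_out hs) -?in_setC //.
by move/setP/(_ x1); rewrite !inE eqxx => /esym/eqP.
Qed.

(* odd_perm s is the parity of #|T| + #|porbits s|; the points outside A are
   fixed, so they count once in each term. *)
Lemma prod_sign_porbits_in (R : pzRingType) A s : perm_on A s ->
  \prod_(c in porbits_in s A) ((-1) ^+ #|c|.+1 : R) = (-1) ^+ odd_perm s.
Proof.
move=> hs; rewrite prodrXr.
have -> : (\sum_(c in porbits_in s A) #|c|.+1 = #|A| + #|porbits_in s A|)%N.
  rewrite (eq_bigr (fun c : {set T} => #|c| + 1)%N) => [|c _]; last by rewrite addn1.
  by rewrite big_split /= sum1_card sum_card_porbits_in ?perm_on_astabs.
rewrite /odd_perm (card_porbits_perm_on hs) -(cardsC A) -signr_odd.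
rewrite -[LHS]signr_odd !oddD; congr (_ ^+ nat_of_bool _).
by case: (odd #|A|); case: (odd #|~: A|); case: (odd #|porbits_in s A|).
Qed.

Lemma restr_perm_mulD A B s : B \subset A -> perm_on A s -> s \in ('N(B | 'P))%g ->
  (restr_perm B s * restr_perm (A :\: B) s)%g = s.
Proof.
move=> BA hs sB; have sA := perm_on_astabs hs.
have sAB : s \in ('N(A :\: B | 'P))%g.
  by apply: (subsetP (astabsD _ _ _)); rewrite inE sA sB.
apply/permP => x; rewrite permM; case xB: (x \in B).
  rewrite (restr_permE sB xB) (out_perm (restr_perm_on _ _)) //.
  by rewrite inE negb_and negbK; have := astabsP sB x; rewrite /aperm xB => ->.
rewrite [restr_perm B s x](out_perm (restr_perm_on _ _)) ?xB //.
case xA: (x \in A); first by rewrite (restr_permE sAB) // inE xB xA.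
by rewrite (out_perm (restr_perm_on _ _)) ?inE ?xA ?andbF // (out_perm hs) ?xA.
Qed.

Section PermOnSplit.
Variables (A B : {set T}) (b g : {perm T}).
Hypotheses (BA : B \subset A) (hb : perm_on B b) (hg : perm_on (A :\: B) g).

Lemma mul_perm_onDE_in x : x \in B -> (b * g)%g x = b x.
Proof.
move=> xB; rewrite permM (out_perm hg) // inE negb_and negbK.
by rewrite (perm_closed _ hb) xB.
Qed.

Lemma mul_perm_onDE_out x : x \in A :\: B -> (b * g)%g x = g x.
Proof. by move=> xAB; rewrite permM (out_perm hb) //; case/setDP: xAB. Qed.

Lemma mul_perm_onD : perm_on A (b * g)%g.
Proof. by apply: perm_onM; [apply: perm_onS hb | apply: perm_onS hg; apply: subsetDl]. Qed.

Lemma mul_perm_onD_astabs : (b * g)%g \in ('N(B | 'P))%g.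
Proof.
apply/astabsP => x; change (((b * g)%g x \in B) = (x \in B)).
case xB: (x \in B); first by rewrite mul_perm_onDE_in // (perm_closed _ hb).
rewrite permM (out_perm hb) ?xB //; case xAB: (x \in A :\: B).
  by apply/negbTE; move: (xAB); rewrite -(perm_closed _ hg) inE => /andP[].
by rewrite (out_perm hg) ?xAB.
Qed.

Lemma restr_perm_mulD_l : restr_perm B (b * g)%g = b.
Proof.
apply/permP => x; case xB: (x \in B).
  by rewrite (restr_permE mul_perm_onD_astabs xB) mul_perm_onDE_in.
by rewrite !(out_perm (restr_perm_on _ _)) ?xB // (out_perm hb) ?xB.
Qed.

Lemma restr_perm_mulD_r : restr_perm (A :\: B) (b * g)%g = g.
Proof.
have sAB : (b * g)%g \in ('N(A :\: B | 'P))%g.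
  apply: (subsetP (astabsD _ _ _)).
  by rewrite inE (perm_on_astabs mul_perm_onD) mul_perm_onD_astabs.
apply/permP => x; case xAB: (x \in A :\: B).
  by rewrite (restr_permE sAB xAB) mul_perm_onDE_out.
by rewrite !(out_perm (restr_perm_on _ _)) ?xAB // (out_perm hg) ?xAB.
Qed.

Lemma porbits_in_mulD_l : porbits_in (b * g)%g B = porbits_in b B.
Proof.
apply: eq_in_imset => x xB; apply: eq_in_porbit xB => y yB.
  by rewrite mul_perm_onDE_in.
by rewrite (perm_closed _ hb).
Qed.

Lemma porbits_in_mulD_r : porbits_in (b * g)%g (A :\: B) = porbits_in g (A :\: B).
Proof.
apply: eq_in_imset => x xAB; apply: eq_in_porbit xAB => y yAB.
  by rewrite mul_perm_onDE_out.
by rewrite (perm_closed _ hg).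
Qed.

End PermOnSplit.
End PermOrbits.

Section CycleSum.
Variables (T : finType) (R : comRingType).
Implicit Types (s : {perm T}) (A B : {set T}) (F G : nat -> R).

Definition cycle_sum F A := \sum_(s | perm_on A s) \prod_(c in porbits_in s A) F #|c|.

Lemma cycle_sum_setT F :
  cycle_sum F setT = \sum_(s : {perm T}) \prod_(c in porbits s) F #|c|.
Proof.
by apply: eq_big => s; [apply/subsetP => x; rewrite inE | rewrite porbits_in_setT].
Qed.

Lemma eq_cycle_sum F G A : F =1 G -> cycle_sum F A = cycle_sum G A.
Proof. by move=> FG; apply: eq_bigr => s _; apply: eq_bigr => c _; rewrite FG. Qed.

Lemma prodrD_subset (I : finType) (P : {set I}) (f g : I -> R) :
  \prod_(c in P) (f c + g c) =
  \sum_(C : {set I} | C \subset P) \prod_(c in C) f c * \prod_(c in P :\: C) g c.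
Proof.
pose f' c := if c \in P then f c else 0; pose g' c := if c \in P then g c else 1.
rewrite big_mkcond /=; transitivity (\prod_c (f' c + g' c)).
  by apply: eq_bigr => c _; rewrite /f' /g'; case: (c \in P); rewrite ?add0r.
rewrite bigA_distr (bigID (fun C : {set I} => C \subset P)) /= [X in _ + X]big1 ?addr0.
  apply: eq_bigr => C CP; rewrite [\prod_(c in C) _]big_mkcond.
  rewrite [\prod_(c in P :\: C) _]big_mkcond -big_split /=.
  apply: eq_bigr => c _; rewrite /f' /g' inE.
  case cC: (c \in C); case cP: (c \in P) => //=; rewrite ?mulr1 ?mul1r //.
  by rewrite (subsetP CP) in cP.
move=> C /subsetPn [c cC cP].
by rewrite (bigD1 c) //= cC /f' (negPf cP) mul0r.
Qed.

(* Permutations of A stabilising B are exactly the products of a permutation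
   of B and one of A :\: B. *)
Lemma cycle_sum_mul F G A B : B \subset A ->
  cycle_sum F B * cycle_sum G (A :\: B) =
  \sum_(s | perm_on A s && (s \in ('N(B | 'P))%g))
     (\prod_(c in porbits_in s B) F #|c| * \prod_(c in porbits_in s (A :\: B)) G #|c|).
Proof.
move=> BA; rewrite /cycle_sum big_distrlr /= pair_big_dep /=.
rewrite (reindex_onto (fun p : {perm T} * {perm T} => (p.1 * p.2)%g)
           (fun s => (restr_perm B s, restr_perm (A :\: B) s))) /=; last first.
  by move=> s /andP[hs sB]; apply: restr_perm_mulD.
apply: eq_big => [[b g]|[b g] /= /andP[hb hg]]; last first.
  by rewrite (porbits_in_mulD_l hb hg) (porbits_in_mulD_r hb hg).
symmetry; apply/idP/idP => /= [/andP[_ /eqP [<- <-]]|/andP[hb hg]].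
  by rewrite !restr_perm_on.
by rewrite (mul_perm_onD BA hb hg) (mul_perm_onD_astabs hb hg)
  (restr_perm_mulD_l hb hg) (restr_perm_mulD_r BA hb hg) eqxx.
Qed.

(* Expanding the product over the cycles of s, each choice of cycles is the
   set of cycles of an s-stable subset B of A. *)
Lemma cycle_sumD F G A :
  cycle_sum (fun i => F i + G i) A =
  \sum_(B : {set T} | B \subset A) cycle_sum F B * cycle_sum G (A :\: B).
Proof.
transitivity (\sum_(s | perm_on A s)
   \sum_(B : {set T} | (B \subset A) && (s \in ('N(B | 'P))%g))
     (\prod_(c in porbits_in s B) F #|c| * \prod_(c in porbits_in s (A :\: B)) G #|c|)).
  apply: eq_bigr => s hs; rewrite prodrD_subset.
  rewrite (reindex_onto (porbits_in s) cover) /=; last by move=> C; apply: porbits_in_cover.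
  have sA := perm_on_astabs hs.
  apply: eq_big => B; first by rewrite porbits_in_stableE.
  by rewrite porbits_in_stableE // => /andP[BA sB]; rewrite porbits_inD.
rewrite (exchange_big_dep (fun B => B \subset A)) /=; last by move=> s B _ /andP[].
by apply: eq_bigr => B BA; rewrite cycle_sum_mul //; apply: eq_bigl => s; rewrite BA.
Qed.

Lemma sum_subsets_card A (h : nat -> R) :
  \sum_(B : {set T} | B \subset A) h #|B| = \sum_(i < #|A|.+1) h i *+ 'C(#|A|, i).
Proof.
rewrite (partition_big (fun B : {set T} => inord #|B| : 'I_#|A|.+1) xpredT) //=.
apply: eq_bigr => i _; rewrite -cards_draws -sumr_const.
apply: eq_big => B; last first.
  by move=> /andP[BA /eqP <-]; rewrite inordK // ltnS subset_leq_card.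
rewrite inE; case BA: (B \subset A) => //=.
by rewrite -val_eqE /= inordK // ltnS subset_leq_card.
Qed.

Lemma cycle_sumD_card F G (f g : nat -> R) A :
  (forall B, cycle_sum F B = f #|B|) -> (forall B, cycle_sum G B = g #|B|) ->
  cycle_sum (fun i => F i + G i) A =
  \sum_(i < #|A|.+1) (f i * g (#|A| - i)%N) *+ 'C(#|A|, i).
Proof.
move=> hF hG; rewrite cycle_sumD -(sum_subsets_card A (fun i => f i * g (#|A| - i)%N)).
by apply: eq_bigr => B BA; rewrite hF hG cardsDS.
Qed.

Lemma cycle_sum0 A : cycle_sum (fun _ => 0) A = (#|A| == 0)%:R.
Proof.
have [-> | [x xA]] := set_0Vmem A.
  rewrite cards0 /cycle_sum (big_pred1 1%g) => [|s]; first by rewrite /porbits_in imset0 big_set0.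
  apply/idP/eqP => [hs|->]; last exact: perm_on1.
  by apply: perm_on_id hs _; rewrite cards0.
rewrite cards_eq0; case: eqP => [A0|_]; first by rewrite A0 inE in xA.
rewrite /cycle_sum big1 // => s hs.
by rewrite (bigD1 (porbit s x)) /= ?mul0r //; apply: imset_f.
Qed.

Lemma cycle_sum_exp (w : R) A : cycle_sum (fun i => w ^+ i) A = w ^+ #|A| *+ #|A|`!.
Proof.
rewrite /cycle_sum (eq_bigr (fun _ => w ^+ #|A|)) => [|s hs]; last first.
  by rewrite prodrXr sum_card_porbits_in // perm_on_astabs.
by rewrite -card_perm -sumr_const.
Qed.

(* A transposition inside A pairs off the even and odd permutations of A. *)
Lemma sum_sign_perm_on A :
  \sum_(s | perm_on A s) ((-1) ^+ odd_perm s : R) = (#|A| <= 1)%:R.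
Proof.
case: leqP => hA.
  rewrite (big_pred1 1%g) ?odd_perm1 // => s.
  by apply/idP/eqP => [hs|->]; [apply: perm_on_id hs hA | apply: perm_on1].
have [x [y [xA yA xy]]] := card_gt1P hA.
have tA : perm_on A (tperm x y).
  by apply: perm_onS (tperm_on x y); apply/subsetP => z; rewrite !inE => /orP[] /eqP ->.
(* Compute in int: the cancellation S = - S only forces S = 0 in characteristic 0. *)
have -> : \sum_(s | perm_on A s) ((-1) ^+ odd_perm s : R) =
          (\sum_(s | perm_on A s) ((-1) ^+ odd_perm s : int))%:~R.
  by rewrite rmorph_sum; apply: eq_bigr => s _; rewrite rmorph_sign.
set S := (\sum_(s | _) _)%R; suff -> : S = 0 by [].
have /eqP : S = - S.
  rewrite {1}/S (reindex_inj (mulgI (tperm x y))) /= -sumrN.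
  apply: eq_big => s; last by move=> _; rewrite odd_mul_tperm xy /= signrN.
  apply/idP/idP => h; last exact: perm_onM.
  by rewrite -(mulKg (tperm x y) s) tpermV; apply: perm_onM.
by rewrite -subr_eq0 opprK -mulr2n mulrn_eq0 /= => /eqP.
Qed.

Lemma cycle_sum_signed_exp (w : R) A :
  cycle_sum (fun i => - (- w) ^+ i) A = (#|A| <= 1)%:R * w ^+ #|A|.
Proof.
rewrite /cycle_sum -sum_sign_perm_on big_distrl /=; apply: eq_bigr => s hs.
rewrite (eq_bigr (fun c : {set T} => (-1) ^+ #|c|.+1 * w ^+ #|c|)) => [|c _]; last first.
  by rewrite [(- w) ^+ _]exprNn exprS mulN1r mulNr.
by rewrite big_split /= prod_sign_porbits_in // prodrXr sum_card_porbits_in ?perm_on_astabs.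
Qed.

End CycleSum.

Section LetterSeries.
Variables (T : finType) (R : comRingType).

Lemma coef_geom_trunc K (c : R) i :
  (\sum_(m < K) (c *: 'X) ^+ m)`_i = if (i < K)%N then c ^+ i else 0.
Proof. by under eq_bigr do rewrite exprZn; rewrite coef_sumMXn big_ord1_eq. Qed.

Lemma coefM_fact (p q : {poly R}) m :
  (p * q)`_m *+ m`! =
  \sum_(i < m.+1) ((p`_i *+ i`!) * (q`_(m - i) *+ (m - i)`!)) *+ 'C(m, i).
Proof.
rewrite coefM -sumrMnl; apply: eq_bigr => i _.
rewrite mulrnAl mulrnAr -!mulrnA; congr (_ *+ _).
rewrite -(bin_fact (ltnSE (ltn_ord i))); lia.
Qed.

Lemma cycle_sum_letter (wb wf : R) K (B : {set T}) : (#|T| < K)%N ->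
  cycle_sum (fun i => wb ^+ i - (- wf) ^+ i) B =
  ((\sum_(m < K) (wb *: 'X) ^+ m) * (1 + wf *: 'X))`_#|B| *+ #|B|`!.
Proof.
move=> TK; rewrite (@cycle_sumD_card _ _ _ _ (fun i => wb ^+ i *+ i`!)
                      (fun i => (i <= 1)%:R * wf ^+ i)); last 2 first.
- by move=> C; apply: cycle_sum_exp.
- by move=> C; apply: cycle_sum_signed_exp.
rewrite coefM_fact; apply: eq_bigr => i _; congr (_ * _ *+ _).
  rewrite coef_geom_trunc ifT //; apply: leq_ltn_trans TK.
  by apply: leq_trans (max_card B); rewrite -ltnS.
rewrite coefD coef1 coefZ coefX.
by case: (#|B| - i)%N => [|[|j]];
  rewrite /= ?expr0 ?expr1 ?mulr0 ?mulr1 ?addr0 ?add0r ?mul1r ?mul0r ?mul0rn.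
Qed.

Lemma cycle_sum_letters (wb wf : nat -> R) K M (B : {set T}) : (#|T| < K)%N ->
  cycle_sum (fun i => \sum_(a < M) (wb a ^+ i - (- wf a) ^+ i)) B =
  (\prod_(a < M) ((\sum_(m < K) (wb a *: 'X) ^+ m) * (1 + wf a *: 'X)))`_#|B|
    *+ #|B|`!.
Proof.
move=> TK; elim: M B => [|M IH] B.
  rewrite (@eq_cycle_sum _ _ _ (fun _ => 0)) ?cycle_sum0 => [|i]; last by rewrite big_ord0.
  by rewrite big_ord0 coef1; case: #|B| => [|m] //=; rewrite mul0rn.
rewrite (@eq_cycle_sum _ _ _ (fun i => \sum_(a < M) (wb a ^+ i - (- wf a) ^+ i)
                                  + (wb M ^+ i - (- wf M) ^+ i))); last first.
  by move=> i; rewrite big_ord_recr.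
rewrite (@cycle_sumD_card _ _ _ _
   (fun i => (\prod_(a < M) ((\sum_(m < K) (wb a *: 'X) ^+ m) * (1 + wf a *: 'X)))`_i *+ i`!)
   (fun i => ((\sum_(m < K) (wb M *: 'X) ^+ m) * (1 + wf M *: 'X))`_i *+ i`!)).
- by rewrite [in RHS]big_ord_recr /= [RHS]coefM_fact.
- by move=> C; apply: IH.
- by move=> C; apply: cycle_sum_letter.
Qed.

End LetterSeries.

Section PartitionExpansion.
Variable R : comRingType.
Implicit Types (p q : {poly R}) (f : nat -> {poly R}).

Definition eq_upto k p q := forall j, (j <= k)%N -> p`_j = q`_j.

Lemma eq_uptoM k p p' q q' :
  eq_upto k p p' -> eq_upto k q q' -> eq_upto k (p * q) (p' * q').
Proof.
move=> hp hq j jk; rewrite !coefM; apply: eq_bigr => i _.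
by rewrite hp ?hq //; move: (ltn_ord i); lia.
Qed.

Lemma eq_upto_prod k N (F G : nat -> {poly R}) : (forall i, eq_upto k (F i) (G i)) ->
  eq_upto k (\prod_(i < N) F i) (\prod_(i < N) G i).
Proof.
move=> FG; elim/big_ind2: _ => [j _ // | ? ? ? ? | i _]; last exact: FG.
exact: eq_uptoM.
Qed.

(* Only the coefficients p_m with m <= k matter, and none at all once i >= k. *)
Lemma eq_upto_comp_XnS k i p : p`_0 = 1 ->
  eq_upto k (p \Po 'X^(i.+1))
    (if (i < k)%N then \sum_(m < k.+1) p`_m *: 'X^(i.+1 * m) else 1).
Proof.
move=> p0 j jk; rewrite coef_comp_poly_Xn //; case: ltnP => ik.
  rewrite coef_sumMXn; case: dvdnP => [[q jE]|ndvd]; last first.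
    by rewrite big_pred0 // => m; apply/negP => /eqP jE; apply: ndvd; exists m; rewrite -jE mulnC.
  rewrite jE mulnK // (eq_bigl (fun m : 'I_k.+1 => m == q :> nat)) => [|m].
    rewrite big_ord1_eq ifT // ltnS; apply: leq_trans jk.
    by rewrite jE leq_pmulr.
  by rewrite /= [(q * _)%N]mulnC eqn_mul2l.
rewrite coef1; case: j jk => [|j] jk /=; first by rewrite div0n.
by rewrite ifN //; apply/negP => /(dvdn_leq (ltn0Sn j)); lia.
Qed.

Lemma coef_prod_comp_XnS k N f : (k <= N)%N -> (forall i, (f i)`_0 = 1) ->
  (\prod_(i < N) (f i.+1 \Po 'X^(i.+1)))`_k =
  \sum_(a : {ffun 'I_k -> 'I_k.+1} | is_part a) \prod_(j < k) (f j.+1)`_(a j).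
Proof.
move=> kN f0.
rewrite (eq_upto_prod N (fun i => @eq_upto_comp_XnS k i _ (f0 i.+1)) (leqnn k)).
rewrite -big_mkcond /=.
rewrite -(big_ord_widen _ (fun i => \sum_(m < k.+1) (f i.+1)`_m *: 'X^(i.+1 * m)) kN).
rewrite bigA_distr_bigA /= coef_sum [RHS]big_mkcond /=; apply: eq_bigr => a _.
rewrite scaler_prod prodrXr coefZ coefXn /is_part eq_sym.
by case: eqP; rewrite ?mulr1 ?mulr0.
Qed.

Lemma coef_geom K j : (\sum_(m < K) 'X^m : {poly R})`_j = (j < K)%:R.
Proof.
have := coef_geom_trunc K (1 : R) j; under eq_bigr do rewrite scale1r.
by rewrite expr1n => ->; case: ltnP.
Qed.

Lemma sum_bin_diag x m : (\sum_(j < m.+1) 'C(x + j - 1, j))%N = 'C(x + m, m).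
Proof.
elim: m => [|m IH]; first by rewrite big_ord1 !bin0.
rewrite big_ord_recr /= IH (_ : x + m.+1 - 1 = x + m)%N; last by lia.
by rewrite addnS binS addnC.
Qed.

Lemma coef_geom_exp K x m : (m < K)%N ->
  ((\sum_(j < K) 'X^j : {poly R}) ^+ x)`_m = 'C(x + m - 1, m)%:R.
Proof.
elim: x m => [|x IH] m mK.
  by rewrite expr0 coef1 add0n; case: m mK => [|m] _ //=; rewrite bin_small //; lia.
rewrite exprS coefM (eq_bigr (fun j : 'I_m.+1 => 'C(x + (m - j) - 1, m - j)%:R)); last first.
  move=> j _; rewrite coef_geom IH; last by move: (ltn_ord j); lia.
  by rewrite (_ : (j < K)%N) ?mul1r //; move: (ltn_ord j); lia.
rewrite -natr_sum (reindex_inj rev_ord_inj) /=.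
rewrite (eq_bigr (fun j : 'I_m.+1 => 'C(x + j - 1, j))) => [|j _]; last first.
  by rewrite subKn // -ltnS.
by rewrite sum_bin_diag; congr (_%:R); congr 'C(_, _); lia.
Qed.

Lemma coef_1addX_exp (c : R) x m :
  ((1 + c *: 'X : {poly R}) ^+ x)`_m = 'C(x, m)%:R * c ^+ m.
Proof.
elim: x m => [|x IH] m.
  by rewrite expr0 coef1; case: m => [|m] //=; rewrite ?mul1r // bin0n mul0r.
rewrite exprS mulrDl mul1r coefD -scalerAl coefZ coefXM IH.
case: m => [|m] /=; first by rewrite !bin0 mulr0 addr0.
by rewrite IH binS natrD mulrDl exprS; ring.
Qed.

End PartitionExpansion.

Section CycleType.
Variable n : nat.
Implicit Type s : {perm 'I_n}.

Lemma card_porbit_le s c : c \in porbits s -> (0 < #|c| <= n)%N.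
Proof.
move=> /imsetP[x _ ->]; rewrite lt0n card_porbit_neq0 /=.
by rewrite -[X in (_ <= X)%N](card_ord n) max_card.
Qed.

Lemma cyc_count_gt s i : (n < i)%N -> cyc_count s i = 0%N.
Proof.
move=> ni; apply/eqP; rewrite cards_eq0; apply/eqP/setP => c; rewrite !inE.
by apply/negbTE/negP => /andP[/card_porbit_le /andP[_ cn] /eqP ci]; lia.
Qed.

Lemma prod_porbits_cyc_count (V : comRingType) s (F : nat -> V) :
  \prod_(c in porbits s) F #|c| = \prod_(i < n) F i.+1 ^+ cyc_count s i.+1.
Proof.
rewrite (partition_big (fun c : {set 'I_n} => inord #|c| : 'I_n.+1) xpredT) //=.
rewrite big_ord_recl /= [X in X * _]big1 ?mul1r => [|c /andP[/card_porbit_le]]; last first.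
  by case/andP=> c0 cn /eqP/(congr1 val); rewrite /= inordK // => c_0; rewrite c_0 in c0.
apply: eq_bigr => i _; rewrite /cyc_count -prodr_const.
apply: eq_big => c; last first.
  move=> /andP[/card_porbit_le /andP[_ cn] /eqP ci]; congr F.
  by move/(congr1 val): ci; rewrite /= inordK //; lia.
rewrite inE; case cP: (c \in porbits s) => //=.
have /andP[_ cn] := card_porbit_le cP.
by rewrite -val_eqE /= inordK.
Qed.

Lemma coef_prod_porbits_comp (R : comRingType) s (f : nat -> {poly R}) k :
  (forall i, (f i)`_0 = 1) ->
  (\prod_(c in porbits s) (f #|c| \Po 'X^#|c|))`_k =
  \sum_(a : {ffun 'I_k -> 'I_k.+1} | is_part a)
     \prod_(j < k) (f j.+1 ^+ cyc_count s j.+1)`_(a j).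
Proof.
move=> f0; rewrite (prod_porbits_cyc_count s (fun i => f i \Po 'X^i)).
have -> : \prod_(i < n) (f i.+1 \Po 'X^(i.+1)) ^+ cyc_count s i.+1 =
          \prod_(i < n + k) (f i.+1 ^+ cyc_count s i.+1 \Po 'X^(i.+1)).
  rewrite big_split_ord /= [X in _ = _ * X]big1 ?mulr1 => [|i _].
    by apply: eq_bigr => i _; rewrite rmorphXn.
  by rewrite cyc_count_gt ?expr0 ?rmorph1 //= ltnS leq_addr.
rewrite (coef_prod_comp_XnS (f := fun i => f i ^+ cyc_count s i)) ?leq_addl // => i.
by rewrite -horner_coef0 horner_exp horner_coef0 f0 expr1n.
Qed.

Lemma coef_prod_porbits_Hval s K k : (k < K)%N ->
  (\prod_(c in porbits s) ((\sum_(m < K) 'X^m : {poly rat}) \Po 'X^#|c|))`_k =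
  Hval k (cyc_count s).
Proof.
move=> kK; rewrite (coef_prod_porbits_comp s (f := fun _ => \sum_(m < K) 'X^m)) => [|i].
  apply: eq_bigr => a _; apply: eq_bigr => j _; rewrite coef_geom_exp //.
  by apply: leq_ltn_trans kK; rewrite -ltnS.
by rewrite coef_geom (leq_ltn_trans _ kK).
Qed.

Lemma sign_part_len (R : pzRingType) l (a : {ffun 'I_l -> 'I_l.+1}) : is_part a ->
  (-1) ^+ (l - part_len a) = \prod_(j < l) (-1) ^+ (j * a j) :> R.
Proof.
rewrite prodrXr /is_part /part_len => /eqP pa; congr (_ ^+ _).
rewrite -{1}pa (eq_bigr (fun j => a j + j * a j)%N) => [|j _]; last by rewrite mulSn.
by rewrite big_split addKn.
Qed.

Lemma coef_prod_porbits_Eval s l :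
  (\prod_(c in porbits s) (1 - (- 'X) ^+ #|c| : {poly rat}))`_l = Eval l (cyc_count s).
Proof.
pose b i : {poly rat} := 1 + (- (-1) ^+ i) *: 'X.
have Eb i : 1 - (- 'X) ^+ i = b i \Po 'X^i.
  rewrite /b comp_polyD rmorph1 comp_polyZ comp_polyX [(- 'X) ^+ _]exprNn scaleNr.
  by rewrite -mul_polyC rmorphXn rmorphN rmorph1.
under eq_bigr do rewrite Eb.
rewrite (coef_prod_porbits_comp s (f := b)) => [|i]; last first.
  by rewrite coefD coef1 coefZ coefX mulr0 addr0.
apply: eq_bigr => a pa; rewrite (sign_part_len _ pa) -big_split /=; apply: eq_bigr => j _.
by rewrite coef_1addX_exp exprS mulN1r opprK -exprM mulrC.
Qed.

End CycleType.

(* In {poly {poly rat}}, the coefficient ring of z, 'X is v and uvar is u. *)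
Definition uvar : {poly {poly rat}} := ('X)%:P.

Definition letter_weight K i : {poly {poly rat}} :=
  \sum_(a < K) ((uvar ^+ a * 'X) ^+ i - (- uvar ^+ a) ^+ i).

Lemma letter_weight_factor K i :
  letter_weight K i =
  (-1) ^+ i.+1 * map_poly polyC (1 - (- 'X) ^+ i : {poly rat})
  * ((\sum_(m < K) 'X^m : {poly rat}) \Po 'X^i)%:P.
Proof.
rewrite raddf_sum rmorph_sum /= big_distrr /letter_weight; apply: eq_bigr => a _.
rewrite rmorphXn /= comp_polyX rmorphB rmorph1 /= rmorphXn /= rmorphN /= map_polyX.
rewrite !rmorphXn /= -/uvar exprMn [(- _) ^+ i]exprNn [(- 'X) ^+ i]exprNn exprS.
rewrite [uvar ^+ a ^+ i]exprAC.
have sign2 : ((-1) ^+ i * (-1) ^+ i : {poly {poly rat}}) = 1.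
  by rewrite -exprD -signr_odd addnn odd_double.
set e := ((-1) ^+ i : {poly {poly rat}}) in sign2 *; set x := uvar ^+ i ^+ a.
transitivity (- e * x + e * e * 'X^i * x); first by rewrite sign2 mul1r; ring.
by ring.
Qed.

Lemma coef_prod_letter_weight n (s : {perm 'I_n}) K k l : (k < K)%N ->
  ((\prod_(c in porbits s) letter_weight K #|c|)`_l)`_k =
  (-1) ^+ odd_perm s * (Hval k (cyc_count s) * Eval l (cyc_count s)).
Proof.
move=> kK; under eq_bigr do rewrite letter_weight_factor.
have sT : perm_on setT s by apply/subsetP => x; rewrite inE.
rewrite !big_split /= -porbits_in_setT (prod_sign_porbits_in _ sT) porbits_in_setT.
rewrite -!rmorph_prod (_ : (-1) ^+ odd_perm s = (((-1) ^+ odd_perm s : rat)%:P)%:P);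
  last by rewrite !rmorph_sign.
rewrite coefMC coefCM coef_map /= -polyCM coefCM coef_prod_porbits_Hval //.
by rewrite coef_prod_porbits_Eval mulrAC -mulrA [Hval _ _ * _]mulrC.
Qed.

Lemma rhs_truncE K : rhs_trunc K =
  \prod_(a < K) ((\sum_(m < K) ((uvar ^+ a * 'X) *: 'X) ^+ m) * (1 + uvar ^+ a *: 'X)).
Proof.
rewrite /rhs_trunc big_split /= mulrC; congr (_ * _); apply: eq_bigr => j _.
  apply: eq_bigr => m _; congr (_ ^+ _).
  by rewrite /uP /vP /zP /uvar -mul_polyC rmorphM rmorphXn.
by rewrite /uP /zP /uvar -mul_polyC rmorphXn.
Qed.

Theorem theorem3p7 :
  forall k l n : nat, exists K0 : nat, forall K : nat, (K0 <= K)%N ->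
    coef3 (rhs_trunc K) k l n = signed_moment_HE k l n.
Proof.
move=> k l n; exists (k + n).+1 => K hK.
have kK : (k < K)%N by lia.
have nK : (#|'I_n| < K)%N by rewrite card_ord; lia.
have := cycle_sum_letters (fun a => uvar ^+ a * 'X) (fun a => uvar ^+ a) K setT nK.
rewrite cardsT card_ord -rhs_truncE cycle_sum_setT => egf.
rewrite /signed_moment_HE /coef3.
under eq_bigr do rewrite -(coef_prod_letter_weight _ l kK).
rewrite -!coef_sum egf !coefMn -[X in _ * X]mulr_natr mulrC mulfK //.
by rewrite pnatr_eq0 -lt0n fact_gt0.
Qed.
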